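(* Let $p$ be a prime and let $A$ be a sequence of length $4p-4$ over $(\mathbb{Z}/p\mathbb{Z})^2$ which contains no zero-sum subsequence of length $p$ and in which every element has multiplicity $<\frac{p}{2}$. Then no (affine) line in $(\mathbb{Z}/p\mathbb{Z})^2$ contains $\frac{3p}{2}$ elements of $A$, i.e. for every line $\ell$ the number of terms of $A$ (counted with multiplicity) lying on $\ell$ is less than $\frac{3p}{2}$.
   Context: Sequences are finite, unordered, may contain repeated elements; a zero-sum subsequence is a subsequence (terms at distinct positions) whose terms sum to $0$. The multiplicity of an element is its number of occurrences. *)

From mathcomp Require Import all_boot all_algebra.
Set Implicit Arguments. Unset Strict Implicit. Unset Printing Implicit Defensive.
Import GRing.Theory.
Local Open Scope ring_scope.

Definition pt (p : nat) := ('F_p * 'F_p)%type.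

Definition padd p (x y : pt p) : pt p := (x.1 + y.1, x.2 + y.2).
Definition pscale p (t : 'F_p) (x : pt p) : pt p := (t * x.1, t * x.2).

Definition psum p (s : seq (pt p)) : pt p :=
  (\sum_(x <- s) x.1, \sum_(x <- s) x.2).

Definition has_zero_sum_subseq_of_length p (A : seq (pt p)) (n : nat) : Prop :=
  exists m : bitseq, size (mask m A) = n /\ psum (mask m A) = (0, 0).

Definition on_line p (a d : pt p) (x : pt p) : bool :=
  [exists t : 'F_p, x == padd a (pscale t d)].

From mathcomp Require Import all_boot all_algebra.
From mathcomp Require Import zify.
Set Implicit Arguments. Unset Strict Implicit. Unset Printing Implicit Defensive.
Import GRing.Theory.

(* Parametrising the line as t |-> a + t d, the points of A on it give a
   sequence w in F_p with multiplicities at most k = (p-1)/2 and more than 3k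
   terms.  Once w is sorted, the terms w_j, w_(j+k), w_(j+2k) (j < k) are
   distinct, so by Cauchy-Davenport the sums of one term from each of these k
   triples cover F_p.  Choosing the sum equal to w_0 + ... + w_(3k) and dropping
   those terms leaves 2k + 1 = p terms of w summing to 0; the corresponding p
   points of A sum to p a + 0 d = 0. *)

Lemma sorted_nth_neq (T : eqType) (leT : rel T) (x0 : T) (s : seq T) k i j :
  transitive leT -> reflexive leT -> antisymmetric leT -> sorted leT s ->
  (forall x, (count_mem x s <= k)%N) -> (i + k <= j)%N -> (j < size s)%N ->
  nth x0 s i != nth x0 s j.
Proof.
move=> leT_tr leT_refl leT_anti s_sorted cnt_s le_ikj lt_js; apply/eqP => eq_ij.
have le_nth := sorted_leq_nth leT_tr leT_refl x0 s_sorted.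
have in_s l : (l <= j)%N -> l \in [pred n | (n < size s)%N] by rewrite inE; lia.
pose run := take (j - i).+1 (drop i s).
have size_run : size run = (j - i).+1 by rewrite size_takel // size_drop; lia.
have run_const : all (pred1 (nth x0 s i)) run.
  apply/(all_nthP x0) => l; rewrite size_run => lt_l.
  rewrite nth_take // nth_drop /=; apply/eqP/leT_anti.
  rewrite (le_nth _ _ (in_s i _) (in_s (i + l) _)) ?leq_addr //; try lia.
  by rewrite eq_ij (le_nth _ _ (in_s (i + l) _) (in_s j _)) //; lia.
have := cnt_s (nth x0 s i).
have : (count_mem (nth x0 s i) run <= count_mem (nth x0 s i) s)%N.
  exact/leq_count_subseq/(subseq_trans (take_subseq _ _) (drop_subseq _ _)).
by move: run_const; rewrite all_count size_run => /eqP->; lia.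
Qed.

Lemma big_nat_blocks (R : Type) (idx : R) (op : Monoid.com_law idx) n k
    (F : nat -> R) :
  \big[op/idx]_(0 <= i < n * k) F i =
  \big[op/idx]_(j < k) \big[op/idx]_(c < n) F (j + c * k).
Proof.
rewrite big_nat_mul big_mkord.
under eq_bigr => c _ do rewrite -{1}[c * k]add0n big_addn mulSn addnK big_mkord.
exact: exchange_big.
Qed.

Section Blocks.

Variables (T : eqType) (w : seq T) (x0 : T) (n k : nat) (g : nat -> T).

Definition block j := [seq nth x0 w (j + c * k) | c <- iota 0 n].

Definition drop_one_mask : bitseq :=
  mkseq (fun i => if (i < n * k)%N then nth x0 w i != g (i %% k) else i == n * k)
        (size w).

Lemma big_mask_blocks (R : Type) (idx : R) (op : Monoid.com_law idx) (F : T -> R) :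
  (n * k < size w)%N ->
  \big[op/idx]_(x <- mask drop_one_mask w) F x =
  op (\big[op/idx]_(j < k) \big[op/idx]_(x <- block j | x != g j) F x)
     (F (nth x0 w (n * k))).
Proof.
move=> lt_nk_w.
pose G i := if nth false drop_one_mask i then F (nth x0 w i) else idx.
have -> : \big[op/idx]_(x <- mask drop_one_mask w) F x =
          \big[op/idx]_(0 <= i < size w) G i.
  rewrite big_mask big_mkcond big_mkord; apply: eq_bigr => i _.
  by rewrite andbT (tnth_nth x0).
rewrite (@big_cat_nat _ _ _ (n * k)) ?(ltnW lt_nk_w) //= [X in op _ X]big_ltn //.
have -> : \big[op/idx]_((n * k).+1 <= i < size w) G i = idx.
  rewrite big_nat_cond big1 // => i /andP[/andP[lt_nk_i lt_i] _].
  by rewrite /G nth_mkseq // ltnNge (ltnW lt_nk_i) /= gtn_eqF.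
rewrite /G nth_mkseq // ltnn eqxx Monoid.mulm1 big_nat_blocks; congr (op _ _).
apply: eq_bigr => j _.
rewrite big_map [RHS]big_mkcond -[in RHS](subn0 n) -/(index_iota 0 n) big_mkord.
apply: eq_bigr => c _; have lt_jck : (j + c * k < n * k)%N.
  by have := ltn_ord j; have := ltn_ord c; nia.
by rewrite nth_mkseq ?lt_jck ?(ltn_trans lt_jck) // addnC modnMDl modn_small.
Qed.

End Blocks.

Local Open Scope ring_scope.

Section Sumset.

Variable V : finZmodType.
Implicit Types (A B : {set V}) (e : V).

Definition sumset A B : {set V} := [set x + y | x in A, y in B].

Fixpoint sumset_iter (T : nat -> {set V}) (n : nat) : {set V} :=
  if n is n'.+1 then sumset (sumset_iter T n') (T n') else [set 0].

Lemma leq_card_sumset A B b : b \in B -> (#|A| <= #|sumset A B|)%N.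
Proof.
move=> bB; rewrite -(card_imset A (addIr b)); apply: subset_leq_card.
by apply/subsetP => _ /imsetP[x xA ->]; apply/imset2P; exists x b.
Qed.

Lemma sumset_davenport_transform_subset A B e :
  sumset (A :|: [set y + e | y in B]) [set y in B | y + e \in A] \subset sumset A B.
Proof.
apply/subsetP => _ /imset2P[x y xA' yB' ->].
move: xA' yB'; rewrite !inE => /orP[xA|/imsetP[z zB ->]] /andP[yB yeA].
  by apply/imset2P; exists x y.
by apply/imset2P; exists (y + e) z => //; rewrite addrC addrA addrAC.
Qed.

Lemma card_davenport_transform A B e :
  (#|A :|: [set (y + e)%R | y in B]| + #|[set y in B | (y + e)%R \in A]|
   = #|A| + #|B|)%N.
Proof.
have cardBe : #|[set y + e | y in B]| = #|B| by apply: card_imset; apply: addIr.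
have -> : [set y in B | y + e \in A] = [set y - e | y in A :&: [set y + e | y in B]].
  apply/setP => y; rewrite !inE; apply/andP/imsetP => [[yB yeA]|[z]].
    by exists (y + e); rewrite ?addrK // inE yeA; apply: imset_f.
  by move=> /setIP[zA /imsetP[x xB zE]] ->; rewrite zE !addrK -zE.
by rewrite card_imset ?cardsUI ?cardBe //; apply: addIr.
Qed.

Lemma mem_sumset_iter (T : nat -> {set V}) n x : x \in sumset_iter T n ->
  exists2 g : nat -> V, (forall j, (j < n)%N -> g j \in T j) & x = \sum_(j < n) g j.
Proof.
elim: n x => [|n IHn] x /=.
  by rewrite inE => /eqP->; exists (fun=> 0) => //; rewrite big_ord0.
case/imset2P=> y z /IHn[g gT ->] zT ->.
exists (fun j => if j == n then z else g j) => [j|].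
  by rewrite ltnS leq_eqVlt; case: eqP => [-> //|_ /= /gT].
rewrite big_ord_recr /= eqxx; congr (_ + _); apply: eq_bigr => j _.
by rewrite ltn_eqF.
Qed.

End Sumset.

Lemma Fp_addr_closed_setT p (A : {set 'F_p}) (d : 'F_p) : prime p ->
  A != set0 -> d != 0 -> {in A, forall x, x + d \in A} -> A = setT.
Proof.
move=> p_pr /set0Pn[a aA] d0 Ad; apply/setP => y; rewrite inE.
have Aad n : a + d *+ n \in A.
  by elim: n => [|n IHn]; rewrite ?mulr0n ?addr0 // mulrSr addrA Ad.
have -> : y = a + d *+ val ((y - a) / d).
  by rewrite -mulr_natr natr_Zp mulrC divfK // addrC subrK.
exact: Aad.
Qed.

Theorem cauchy_davenport p (A B : {set 'F_p}) : prime p ->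
  A != set0 -> B != set0 -> (minn p (#|A| + #|B| - 1) <= #|sumset A B|)%N.
Proof.
move=> p_pr; move: {2}#|B| (leqnn #|B|) => n; elim: n A B => [|n IHn] A B.
  by rewrite leqn0 cards_eq0 => /eqP-> _; rewrite eqxx.
move=> leBn A0 B0; have [le_B1|/card_gt1P[b [b' [bB b'B neqb]]]] := leqP #|B| 1.
  case/set0Pn: (B0) => b bB.
  have -> : #|B| = 1%N by apply/anti_leq; rewrite le_B1 card_gt0.
  by rewrite addnK (leq_trans (geq_minr _ _)) // (leq_card_sumset A bB).
have [ABT|ABnT] := eqVneq (sumset A B) setT.
  by rewrite ABT cardsT card_Fp // geq_minl.
have [a aA ab'A] : exists2 a, a \in A & a + (b' - b) \notin A.
  apply/exists_inP; apply: contraR ABnT => /exists_inPn Aclosed.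
  have AT : A = setT.
    apply: (@Fp_addr_closed_setT _ _ (b' - b) p_pr A0).
      by rewrite subr_eq0 eq_sym.
    by move=> x /Aclosed/negbNE.
  apply/eqP/setP => y; rewrite inE; apply/imset2P; exists (y - b) b => //.
    by rewrite AT inE.
  by rewrite subrK.
pose A' := A :|: [set y + (a - b) | y in B].
pose B' := [set y in B | y + (a - b) \in A].
have bB' : b \in B' by rewrite inE bB addrC subrK aA.
have ltB'B : (#|B'| < #|B|)%N.
  apply/proper_card/properP; split; first by apply/subsetP => y; rewrite inE => /andP[].
  by exists b' => //; rewrite inE b'B addrCA.
have A'0 : A' != set0 by apply/set0Pn; exists a; rewrite inE aA.
have B'0 : B' != set0 by apply/set0Pn; exists b.
have leB'n : (#|B'| <= n)%N by rewrite -ltnS (leq_trans ltB'B leBn).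
rewrite -(card_davenport_transform A B (a - b)).
exact: leq_trans (IHn A' B' leB'n A'0 B'0)
                 (subset_leq_card (sumset_davenport_transform_subset A B (a - b))).
Qed.

Lemma card_sumset_iter p (T : nat -> {set 'F_p}) n m : prime p ->
  (forall j, (j < n)%N -> (m < #|T j|)%N) ->
  (minn p (n * m).+1 <= #|sumset_iter T n|)%N.
Proof.
move=> p_pr; elim: n => [|n IHn] cardT /=; first by rewrite cards1 geq_minr.
have IH := IHn (fun j ltjn => cardT j (ltnW ltjn)).
have Tn := cardT n (ltnSn n).
have S0 : sumset_iter T n != set0.
  by rewrite -card_gt0 (leq_trans _ IH) // leq_min prime_gt0.
have T0 : T n != set0 by rewrite -card_gt0 (leq_trans _ Tn).
apply: leq_trans (cauchy_davenport p_pr S0 T0).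
by move: IH Tn; move: #|sumset_iter T n| #|T n| => s t; lia.
Qed.

Lemma sorted_zero_sum_Fp p k (w : seq 'F_p) : prime p -> p = k.*2.+1 ->
  sorted (relpre val leq) w -> (3 * k < size w)%N ->
  (forall x, (count_mem x w <= k)%N) ->
  exists s, [/\ subseq s w, size s = p & \sum_(x <- s) x = 0].
Proof.
move=> p_pr p_eq w_sorted lt_3k_w cnt_w.
have neq_nth i j : (i + k <= j)%N -> (j < size w)%N -> w`_i != w`_j.
  apply: sorted_nth_neq w_sorted cnt_w => [y x z|x|x y /anti_leq/val_inj //].
    exact: leq_trans.
  exact: leqnn.
have uniq_block j : (j < k)%N -> uniq (block w 0 3 k j).
  move=> lt_jk; rewrite map_inj_in_uniq ?iota_uniq // => c c'.
  rewrite !mem_iota /= => lt_c3 lt_c'3; apply: contra_eq.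
  by case: ltngtP => // lt_cc' _; [|rewrite eq_sym]; apply: neq_nth; nia.
have block_gt2 j : (j < k)%N -> (2 < #|[set x in block w 0%R 3 k j]|)%N.
  by move=> lt_jk; rewrite cardsE (card_uniqP (uniq_block j lt_jk)) size_map size_iota.
have sumsetT : sumset_iter (fun j => [set x in block w 0 3 k j]) k = setT.
  apply/eqP; rewrite eqEcard subsetT cardsT card_Fp //.
  by move: (card_sumset_iter p_pr block_gt2); move: #|_| => c; lia.
pose target := \sum_(j < k) \sum_(x <- block w 0 3 k j) x + w`_(3 * k).
have := in_setT target; rewrite -sumsetT => /mem_sumset_iter[g g_block target_eq].
have split_block j (R : Type) (idx : R) (op : Monoid.com_law idx) (F : 'F_p -> R) :
    (j < k)%N -> \big[op/idx]_(x <- block w 0 3 k j) F x =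
                 op (F (g j)) (\big[op/idx]_(x <- block w 0 3 k j | x != g j) F x).
  move=> lt_jk; apply: bigD1_seq (uniq_block j lt_jk).
  by have := g_block j lt_jk; rewrite inE.
(* Dropping g j from each block leaves 2k + 1 terms summing to target - \sum g = 0. *)
exists (mask (drop_one_mask w 0 3 k g) w); split; first exact: mask_subseq.
  rewrite -sum1_size big_mask_blocks // (eq_bigr (fun=> 2%N)) => [|j _].
    by rewrite sum_nat_const card_ord p_eq /=; lia.
  have := split_block j _ _ addn (fun=> 1%N) (ltn_ord j).
  by rewrite /= sum1_size size_map size_iota; lia.
have sum_kept j : (j < k)%N ->
    \sum_(x <- block w 0 3 k j | x != g j) x = \sum_(x <- block w 0 3 k j) x - g j.
  by move=> lt_jk; rewrite (split_block j _ _ +%R id) //= [g j + _]addrC addrK.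
rewrite (@big_mask_blocks _ w 0 3 k g _ _ +%R id) //.
under eq_bigr => j _ do rewrite sum_kept //.
by rewrite sumrB /= addrAC -/target target_eq subrr.
Qed.

Lemma zero_sum_Fp p k (w : seq 'F_p) : prime p -> p = k.*2.+1 ->
  (3 * k < size w)%N -> (forall x, (count_mem x w <= k)%N) ->
  exists s, [/\ subseq s w, size s = p & \sum_(x <- s) x = 0].
Proof.
move=> p_pr p_eq lt_3k_w cnt_w.
have perm_w : perm_eq (sort (relpre val leq) w) w by apply/permEl/perm_sort.
have [|||s [sub_s size_s sum_s]] :=
  @sorted_zero_sum_Fp p k (sort (relpre val leq) w) p_pr p_eq.
- by apply: sort_sorted => x y; apply: leq_total.
- by rewrite size_sort.
- by move=> x; rewrite (permP perm_w).
have /count_subseqP[s' sub_s' perm_s] : forall x, (count_mem x s <= count_mem x w)%N.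
  by move=> x; rewrite -(permP perm_w); apply: leq_count_subseq sub_s.
exists s'; split=> //; first by rewrite -(perm_size perm_s).
rewrite -(perm_big _ perm_s); exact: sum_s.
Qed.

Lemma psum_map_line p (a d : 'F_p * 'F_p) (s : seq 'F_p) :
  psum [seq padd a (pscale t d) | t <- s] =
  padd (pscale (size s)%:R a) (pscale (\sum_(t <- s) t) d).
Proof.
rewrite /psum /padd /pscale !big_map; congr (_, _); rewrite big_split /= -mulr_suml.
all: by rewrite big_const_seq count_predT iter_addr_0 mulr_natl.
Qed.

Theorem corollary2p4 (p : nat) (A : seq ('F_p * 'F_p)) :
  prime p ->
  size A = (4 * p - 4)%N ->
  ~ has_zero_sum_subseq_of_length A p ->
  (forall x, (2 * count_mem x A < p)%N) ->
  forall a d : 'F_p * 'F_p, d != (0, 0)%R ->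
    (2 * count (on_line a d) A < 3 * p)%N.
Proof.
move=> p_pr size_A no_zero_sum mult_A a d _.
rewrite ltnNge; apply/negP => many_on_line.
have [p2|p_odd] := even_prime p_pr.
  case: A size_A mult_A {no_zero_sum many_on_line} => [|x A] /= size_A mult_A.
    by lia.
  by have := mult_A x; rewrite /= eqxx; lia.
pose k := p./2; have p_eq : p = k.*2.+1 by rewrite -[LHS]odd_double_half p_odd.
pose pt_at t := padd a (pscale t d).
have [T line_eq] : exists T, filter (on_line a d) A = map pt_at T.
  exists (map (fun x => odflt 0 [pick t | x == pt_at t]) (filter (on_line a d) A)).
  rewrite -map_comp map_id_in // => x; rewrite mem_filter => /andP[/existsP[t x_t] _] /=.
  by case: pickP => [t' /eqP //|/(_ t)]; rewrite x_t.
have cnt_T t : (count_mem t T <= k)%N.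
  have : (count_mem t T <= count_mem (pt_at t) A)%N.
    apply: leq_trans (leq_count_subseq _ (filter_subseq (on_line a d) A)).
    by rewrite line_eq count_map; apply: sub_count => u /= /eqP->.
  by have := mult_A (pt_at t); lia.
have size_T : (3 * k < size T)%N.
  by rewrite -(size_map pt_at) -line_eq size_filter; lia.
have [s [sub_s size_s sum_s]] := zero_sum_Fp p_pr p_eq size_T cnt_T.
have /subseqP[m _ mask_eq] : subseq (map pt_at s) A.
  apply: subseq_trans (filter_subseq (on_line a d) A).
  by rewrite line_eq; apply: map_subseq.
apply: no_zero_sum; exists m; rewrite -mask_eq size_map psum_map_line size_s sum_s.
by rewrite pchar_Fp_0 //; split=> //; rewrite /padd /pscale !mul0r addr0.
Qed.
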